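(* Let $\Gamma$ be an elliptic graph with NN-elliptic sequence $\{B_j\}$ and cycles $C_j$, and let $\ell\in Supp_j(P_0)$ for some $-1\le j\le m-1$. Write $Z_K-E-\ell=C_j+\sum_{v\in\mathcal V(\Gamma)\setminus\mathcal V(B_{j+1})}m_vE_v$ with $m_v\in\mathbb Z_{\ge 0}$. If $m_v\ne0$, then $v$ is not adjacent to any vertex of $B_{j+1}$.
   Context: Let $\Gamma$ be a finite connected tree with vertex set $\mathcal V$, each vertex $v$ decorated by an integer $e_v$ (genera zero). $L=\mathbb Z\langle E_v\rangle$ with form $(E_v,E_v)=e_v$, $(E_v,E_w)=1$ for adjacent $v\ne w$, $0$ otherwise, assumed negative definite; $L'$ the dual lattice $\{l'\in L\otimes\mathbb Q:(l',L)\subset\mathbb Z\}$, $[l']$ the class in $L'/L$; $E_v^*$ with $(E_v^*,E_w)=-\delta_{vw}$; $\delta_v$ valency; $E=\sum E_v$; $\ge$ coordinatewise, $\prec$ strict in all coordinates, $l>0$ if $l\ge0,l\ne0$; $|l'|$ the support. $Z_K$ with $(Z_K,E_v)=e_v+2$; $\chi(l')=-(l',l'-Z_K)/2$. $\mathcal S'=\{l':(l',E_v)\le0\ \forall v\}$, $s_h=\min\{l'\in\mathcal S':[l']=h\}$; $Z_{min}(B)$ the minimal nonzero element of $\mathcal S'(B)\cap L(B)$ for a connected full subgraph $B$. $Z(\mathbf t)=\sum z(l')\mathbf t^{l'}$ the Taylor expansion at $0$ of $\prod_v(1-\mathbf t^{E_v^*})^{\delta_v-2}$; $P_0(\mathbf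 t)=\sum_{\ell\in L,\ell\not\prec0}w(\ell)\mathbf t^\ell$, $w(\ell)=z(Z_K-E-\ell)$, $Supp(P_0)=\{\ell\not\prec0:w(\ell)\ne0\}$. Elliptic graph: $e_v\le-2$ for all $v$, $\min_{l\in L,l>0}\chi(l)=0$. NN-elliptic sequence: $B_{-1}=\Gamma$, $Z_{B_{-1}}=s_{[Z_K]}$, $B_0=|Z_K-s_{[Z_K]}|$; for $j\ge0$, $Z_{B_j}=Z_{min}(B_j)$, and if $Z_K-\sum_{i=-1}^jZ_{B_i}\ne0$ then $B_{j+1}=|Z_K-\sum_{i=-1}^jZ_{B_i}|$; $m$ is the index with $Z_K=\sum_{i=-1}^mZ_{B_i}$; $C_j=\sum_{i=-1}^jZ_{B_i}$. For $\ell\in Supp(P_0)$ with $\mathcal V^{<0}(\ell)=\{v:\ell_v<0\}$, the associated cycle is the unique $l'$ with $\ell=Z_K-E-l'-\sum_{v\in\mathcal V^{<0}(\ell)}m_vE_v$, $l'\le Z_K$, $l'_v=(Z_K)_v$ on $\mathcal V^{<0}(\ell)$, $m_v\in\mathbb Z_{\ge0}$; $Supp_j(P_0)$ is the set of $\ell$ with associated cycle $C_j$ (for such $\ell$ it is known that $\mathcal V^{<0}(\ell)=\mathcal V\setminus\mathcal V(B_{j+1})$). *)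

(* Plumbing graphs: vertices 'I_n, rational row vectors 'rV[rat]_n
   represent elements of L (x) Q in the basis (E_v). *)
From mathcomp Require Import all_boot all_order all_algebra.
Set Implicit Arguments. Unset Strict Implicit. Unset Printing Implicit Defensive.
Import Order.TTheory GRing.Theory Num.Theory.
Local Open Scope ring_scope.

Section Plumbing.
Variable n : nat.
Variable adj : rel 'I_n.
Variable e : 'I_n -> int.

Definition vec := 'rV[rat]_n.

Definition Ev (v : 'I_n) : vec := delta_mx 0 v.
Definition EE : vec := \sum_v Ev v.

Definition is_tree : Prop :=
  [/\ (0 < n)%N, symmetric adj, irreflexive adj,
      (forall v w, connect adj v w) &
      #|[set p : 'I_n * 'I_n | adj p.1 p.2]| = (2 * n.-1)%N].

Definition valency (v : 'I_n) : nat := #|[set w | adj v w]|.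

Definition IM : 'M[rat]_n :=
  \matrix_(v, w) (if v == w then (e v)%:~R else if adj v w then 1 else 0).

Definition form (x y : vec) : rat := (x *m IM *m y^T) 0 0.

Definition inL (x : vec) : Prop := forall v, x 0 v \is a Num.int.
Definition inL' (x : vec) : Prop := forall v, form x (Ev v) \is a Num.int.

Definition leV (x y : vec) : Prop := forall v, x 0 v <= y 0 v.

Definition supp (x : vec) : {set 'I_n} := [set v | x 0 v != 0].

Definition neg_definite : Prop :=
  forall x : vec, inL x -> x != 0 -> form x x < 0.

(* E_v^* : (E_v^*, E_w) = - delta_vw *)
Definition Estar (v : 'I_n) : vec := - row v (invmx IM).

(* Z_K : (Z_K, E_v) = e_v + 2 *)
Definition ZK : vec := - \sum_v ((e v + 2)%:~R *: Estar v).

Definition chi (x : vec) : rat := - form x (x - ZK) / 2.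

Definition elliptic : Prop :=
  (forall v, e v <= -2) /\
  (exists l : vec, [/\ inL l, leV 0 l, l != 0 & chi l = 0]) /\
  (forall l : vec, inL l -> leV 0 l -> l != 0 -> 0 <= chi l).

Definition inS' (x : vec) : Prop := inL' x /\ forall v, form x (Ev v) <= 0.

(* x = s_{[Z_K]} : the minimum of {l' in S' : [l'] = [Z_K]} *)
Definition is_sZK (x : vec) : Prop :=
  [/\ inS' x, inL (x - ZK) &
      forall y, inS' y -> inL (y - ZK) -> leV x y].

(* elements of S'(B) \cap L(B), B the full subgraph on the vertex set B *)
Definition inSL (B : {set 'I_n}) (x : vec) : Prop :=
  [/\ forall v, v \notin B -> x 0 v = 0, inL x &
      forall v, v \in B -> form x (Ev v) <= 0].

Definition is_Zmin (B : {set 'I_n}) (x : vec) : Prop :=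
  [/\ inSL B x, x != 0 &
      forall y, inSL B y -> y != 0 -> leV x y].

(* NN-elliptic sequence, with shifted indices: Bs k = B_{k-1}, Zs k = Z_{B_{k-1}},
   M = m + 1.  C k = C_{k-1} = sum_{i <= k} Zs i. *)
Definition Csum (Zs : nat -> vec) (k : nat) : vec := \sum_(i < k.+1) Zs i.

Definition NN_elliptic_seq (M : nat) (Bs : nat -> {set 'I_n}) (Zs : nat -> vec) : Prop :=
  [/\ Bs 0%N = [set: 'I_n], is_sZK (Zs 0%N),
      (forall k, (1 <= k <= M)%N -> is_Zmin (Bs k) (Zs k)),
      (forall k, (k < M)%N -> ZK - Csum Zs k != 0 /\ Bs k.+1 = supp (ZK - Csum Zs k)) &
      ZK = Csum Zs M].

(* Taylor coefficients of (1 - x)^k, k integer *)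
Definition binom_coef (k : int) (m : nat) : rat :=
  match k with
  | Posz a => (-1) ^+ m * ('C(a, m))%:R
  | Negz a => ('C(m + a, m))%:R
  end.

(* bound on the exponents n_v appearing in the coefficient of t^l *)
Definition zbound (l : vec) : nat :=
  (\max_(v : 'I_n) Num.truncn (l ord0 v / Estar v ord0 v)%R).+1.

(* z(l') : coefficient of t^{l'} in the expansion of prod_v (1 - t^{E_v^*})^{delta_v - 2},
   i.e. sum over (n_v) with sum_v n_v E_v^* = l' of prod_v coef_{delta_v-2}(n_v).
   (The sum is restricted to n_v < zbound l', which loses nothing since all entries
   of E_v^* are >= 0 and its diagonal entries are > 0.) *)
Definition zcoef (l : vec) : rat :=
  \sum_(nn : {ffun 'I_n -> 'I_(zbound l)})
     (if \sum_v ((nn v : nat)%:R *: Estar v) == l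
      then \prod_v binom_coef ((valency v)%:Z - 2) (nn v) else 0).

Definition wP0 (l : vec) : rat := zcoef (ZK - EE - l).

Definition inSuppP0 (l : vec) : Prop :=
  [/\ inL l, exists v, 0 <= l 0 v & wP0 l != 0].

Definition assoc_cycle (l c : vec) : Prop :=
  [/\ exists mm : 'I_n -> nat,
        l = ZK - EE - c - \sum_(v | l 0 v < 0) ((mm v)%:R *: Ev v),
      leV c ZK &
      forall v, l 0 v < 0 -> c 0 v = ZK 0 v].

End Plumbing.

From Pilot Require Import Defs.
From mathcomp Require Import all_boot all_order all_algebra.
Import Order.TTheory GRing.Theory Num.Theory.
Local Open Scope ring_scope.
Set Implicit Arguments. Unset Strict Implicit. Unset Printing Implicit Defensive.

(* Write D := Z_K - C_j = \sum_{i > j} Z_{B_i}; it is effective with support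
   B_{j+1}.  Every Z_{B_i} with i <= j satisfies (Z_{B_i}, E_u) <= 0 for u in
   B_{j+1} \subset B_i, hence so does C_j.  On the other hand ellipticity gives
   0 <= chi(D) = (C_j, D)/2 = \sum_u D_u (C_j, E_u)/2, so (C_j, E_u) = 0 on
   B_{j+1}.  Finally w(l) != 0 forces Z_K - E - l to be a nonnegative
   combination of the E_v^*, so it pairs nonpositively with every E_w; for
   w in B_{j+1} this pairing is \sum_v m_v (E_v, E_w), which is >= m_v > 0 as
   soon as v is adjacent to w. *)

Section Form.
Variables (n : nat) (adj : rel 'I_n) (e : 'I_n -> int).

Local Notation form := (Defs.form adj e).
Local Notation IM := (IM adj e).

Lemma leV0P (x : vec n) : leV 0 x <-> forall v, 0 <= x 0 v.
Proof. by split=> h v; have := h v; rewrite mxE. Qed.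

Lemma form_Ev (x : vec n) w : form x (Ev w) = (x *m IM) 0 w.
Proof. by rewrite /Defs.form /Ev trmx_delta -colE mxE. Qed.

Lemma formE (x y : vec n) : form x y = \sum_i form x (Ev i) * y 0 i.
Proof.
rewrite [LHS]/Defs.form mxE; apply: eq_bigr => i _.
by rewrite form_Ev [y^T _ _]mxE.
Qed.

Lemma formDl (x y z : vec n) : form (x + y) z = form x z + form y z.
Proof. by rewrite /Defs.form !mulmxDl mxE. Qed.

Lemma formNl (x y : vec n) : form (- x) y = - form x y.
Proof. by rewrite /Defs.form !mulNmx mxE. Qed.

Lemma formBl (x y z : vec n) : form (x - y) z = form x z - form y z.
Proof. by rewrite formDl formNl. Qed.

Lemma formZl a (x y : vec n) : form (a *: x) y = a * form x y.
Proof. by rewrite /Defs.form -!scalemxAl mxE. Qed.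

Lemma form_suml I (r : seq I) (P : pred I) (F : I -> vec n) (y : vec n) :
  form (\sum_(i <- r | P i) F i) y = \sum_(i <- r | P i) form (F i) y.
Proof. by rewrite /Defs.form !mulmx_suml summxE. Qed.

Lemma formNr (x y : vec n) : form x (- y) = - form x y.
Proof. by rewrite /Defs.form linearN /= mulmxN mxE. Qed.

Lemma formC : symmetric adj -> forall x y : vec n, form x y = form y x.
Proof.
move=> adjC x y; have IMC : IM^T = IM.
  by apply/matrixP => u w; rewrite !mxE eq_sym adjC; case: eqP => [->|].
rewrite /Defs.form -[x *m _ *m _]trmxK [LHS]mxE.
by rewrite !trmx_mul trmxK IMC mulmxA.
Qed.

Lemma form_Ev_Ev u w : u != w -> form (Ev u) (Ev w) = (adj u w)%:R.
Proof.
by move=> /negbTE uw; rewrite form_Ev -rowE !mxE uw; case: (adj u w).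
Qed.

Lemma form_ge0_disjoint_supp (p y : vec n) :
  leV 0 p -> leV 0 y -> (forall i, p 0 i * y 0 i = 0) -> 0 <= form p y.
Proof.
move=> /leV0P p_ge0 /leV0P y_ge0 py0.
rewrite formE; apply: sumr_ge0 => i _; rewrite [p]row_sum_delta form_suml mulr_suml.
apply: sumr_ge0 => j _; rewrite formZl.
have [<-|ji] := eqVneq j i; first by rewrite mulrAC py0 mul0r.
by rewrite form_Ev_Ev // !mulr_ge0.
Qed.

(* The negative part y of x has (y, y) = (x_+, y) - (x, y) >= 0. *)
Lemma inSL_ge0 (B : {set 'I_n}) (x : vec n) :
  neg_definite adj e -> inSL adj e B x -> leV 0 x.
Proof.
move=> Hneg [Hout xL Hin].
pose y : vec n := \row_v (if x 0 v < 0 then - x 0 v else 0).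
pose p : vec n := \row_v (if x 0 v < 0 then 0 else x 0 v).
have yE : y = p - x.
  by apply/rowP => v; rewrite !mxE; case: ifP; rewrite ?sub0r ?subrr.
have y_ge0 : leV 0 y.
  by apply/leV0P => i; rewrite mxE; case: ifP => // /ltW; rewrite oppr_ge0.
have p_ge0 : leV 0 p by apply/leV0P => i; rewrite mxE; case: ifP; rewrite // leNgt => ->.
have y0 : y = 0.
  apply/eqP; apply: contraT => y_neq0.
  have yL : inL y by move=> v; rewrite mxE; case: ifP; rewrite ?rpredN ?rpred0 ?xL.
  have xy_le0 : form x y <= 0.
    rewrite formE; apply: sumr_le0 => i _; rewrite [y 0 i]mxE.
    case: ifP => [xi_lt0|_]; last by rewrite mulr0.
    have iB : i \in B by apply: contraTT xi_lt0 => /Hout ->; rewrite ltxx.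
    by rewrite mulr_le0_ge0 ?Hin // oppr_ge0 ltW.
  have py_ge0 : 0 <= form p y.
    by apply: form_ge0_disjoint_supp => // i; rewrite !mxE; case: ifP; rewrite ?mul0r ?mulr0.
  have := Hneg y yL y_neq0; rewrite {1}yE formBl ltNge.
  by rewrite subr_ge0 (le_trans xy_le0 py_ge0).
by apply/leV0P => v; move/leV0P: p_ge0 => /(_ v); rewrite -[x](subKr p) -yE y0 subr0.
Qed.

Lemma IM_unitmx : neg_definite adj e -> IM \in unitmx.
Proof.
move=> Hneg; rewrite unitmxE unitfE; apply/negP => /det0P [x x_neq0 xIM].
pose c : rat := (\prod_v denq (x 0 v))%:~R.
have c_neq0 : c != 0 by rewrite intr_eq0; apply/prodf_neq0 => v _; apply: denq_neq0.
have cxL : inL (c *: x).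
  move=> v; rewrite mxE /c (bigD1 v) //= rmorphM /= mulrAC.
  by rewrite [(denq _)%:~R * _]mulrC -numqE rpredM // intr_int.
have := Hneg _ cxL; rewrite scaler_eq0 negb_or c_neq0 x_neq0 => /(_ isT).
by rewrite formE big1 ?ltxx // => i _; rewrite form_Ev -scalemxAl xIM scaler0 !mxE mul0r.
Qed.

Lemma form_Estar_Ev v w : IM \in unitmx -> form (Estar adj e v) (Ev w) = - (v == w)%:R.
Proof.
by move=> IMu; rewrite form_Ev /Estar mulNmx -row_mul mulVmx // row1 !mxE eqxx eq_sym.
Qed.

(* A nonzero coefficient of Z(t) sits at a nonnegative combination of the E_v^*. *)
Lemma zcoef_neq0_form_le0 (x : vec n) w :
  IM \in unitmx -> zcoef adj e x != 0 -> form x (Ev w) <= 0.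
Proof.
move=> IMu; rewrite /zcoef.
case: (pickP (fun nn : {ffun 'I_n -> 'I_(zbound adj e x)} =>
   \sum_v ((nn v : nat)%:R *: Estar adj e v) == x)) => [nn /eqP <- _|none]; last first.
  by rewrite big1 ?eqxx // => nn _; rewrite none.
rewrite form_suml; apply: sumr_le0 => v _.
by rewrite formZl form_Estar_Ev // mulrN oppr_le0 mulr_ge0.
Qed.

Lemma chi_ZK_sub (c : vec n) :
  symmetric adj -> chi adj e (ZK adj e - c) = form c (ZK adj e - c) / 2.
Proof.
by move=> adjC; rewrite /chi addrAC subrr add0r formNr opprK formC.
Qed.

Lemma form_Ev_eq0_supp (x d : vec n) : leV 0 d ->
  {in supp d, forall u, form x (Ev u) <= 0} -> 0 <= form x d ->
  {in supp d, forall u, form x (Ev u) = 0}.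
Proof.
move=> /leV0P d_ge0 x_le0 xd_ge0 u ud.
pose F i := - (form x (Ev i) * d 0 i).
have F_ge0 i : true -> 0 <= F i.
  move=> _; rewrite oppr_ge0; have [->|di] := eqVneq (d 0 i) 0; first by rewrite mulr0.
  by rewrite mulr_le0_ge0 // x_le0 // inE.
have sumF0 : \sum_i F i = 0.
  by apply/eqP; rewrite eq_le sumr_ge0 // andbT sumrN oppr_le0 -formE.
move: (psumr_eq0P F_ge0 sumF0 (i := u) isT) => /eqP.
by rewrite oppr_eq0 mulf_eq0; move: ud; rewrite inE => /negbTE ->; rewrite orbF => /eqP.
Qed.

Lemma supp_addl (x y : vec n) : leV 0 x -> leV 0 y -> supp y \subset supp (x + y).
Proof.
move=> /leV0P x_ge0 /leV0P y_ge0; apply/subsetP => u; rewrite !inE mxE => yu.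
by rewrite lt0r_neq0 // ltr_wpDl // lt0r yu y_ge0.
Qed.

Lemma form_sum_Ev_gt0 (B : {set 'I_n}) (mm : 'I_n -> nat) v w :
  v \notin B -> w \in B -> mm v != 0%N -> adj v w ->
  0 < form (\sum_(u | u \notin B) (mm u)%:R *: Ev u) (Ev w).
Proof.
move=> vB wB mv vw; have Bw u : u \notin B -> u != w by apply: contraNneq => ->.
rewrite form_suml (bigD1 v) //= ltr_wpDr //.
- by apply: sumr_ge0 => u /andP[uB _]; rewrite formZl form_Ev_Ev ?Bw ?mulr_ge0.
- by rewrite formZl form_Ev_Ev ?Bw // vw mulr1 ltr0n lt0n.
Qed.

End Form.

Section EllipticSequence.
Variables (n : nat) (adj : rel 'I_n) (e : 'I_n -> int).
Variables (M : nat) (Bs : nat -> {set 'I_n}) (Zs : nat -> vec n).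
Hypothesis Hneg : neg_definite adj e.
Hypothesis Hseq : NN_elliptic_seq adj e M Bs Zs.

Local Notation form := (Defs.form adj e).
Local Notation ZK := (ZK adj e).

Lemma Zs_inSL t : (1 <= t <= M)%N -> inSL adj e (Bs t) (Zs t).
Proof. by have [_ _ HZ _ _] := Hseq => /HZ []. Qed.

Lemma ZK_subCsum a : (a <= M)%N -> ZK - Csum Zs a = \sum_(a.+1 <= t < M.+1) Zs t.
Proof.
have [_ _ _ _ ->] := Hseq => aM.
rewrite /Csum -!(big_mkord xpredT) (@big_cat_nat _ _ _ a.+1 0 M.+1) ?ltnS //=.
by rewrite addrC addrK.
Qed.

Lemma sum_Zs_ge0 a b : (b <= M.+1)%N -> leV 0 (\sum_(a.+1 <= t < b) Zs t).
Proof.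
move=> bM; apply/leV0P => u; rewrite summxE big_nat_cond; apply: sumr_ge0 => t.
move=> /andP[/andP[lt_at lt_tb] _].
have t_range : (1 <= t <= M)%N.
  by rewrite (leq_ltn_trans (leq0n a) lt_at) -ltnS (leq_trans lt_tb bM).
by have /leV0P := inSL_ge0 Hneg (Zs_inSL t_range); apply.
Qed.

Lemma Bs_supp k : (k < M)%N -> Bs k.+1 = supp (ZK - Csum Zs k).
Proof. by have [_ _ _ HBs _] := Hseq => /HBs []. Qed.

Lemma Bs_subset t k : (t <= k)%N -> (k < M)%N -> Bs k.+1 \subset Bs t.+1.
Proof.
move=> tk kM; have tM := leq_ltn_trans tk kM.
rewrite (Bs_supp kM) (Bs_supp tM) (ZK_subCsum (ltnW kM)) (ZK_subCsum (ltnW tM)).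
rewrite (@big_cat_nat _ _ _ k.+1 t.+1 M.+1 _ _ tk (ltnW kM)) /=.
by apply: supp_addl; apply: sum_Zs_ge0 => //; apply: ltnW.
Qed.

Lemma Csum_form_Ev_le0 k u : (k < M)%N -> u \in Bs k.+1 -> form (Csum Zs k) (Ev u) <= 0.
Proof.
move=> kM uB; rewrite form_suml; apply: sumr_le0 => -[[|t] tk] _ /=.
  by have [_ [[_ Zs0_le0] _ _] _ _ _] := Hseq; apply: Zs0_le0.
have [_ _ Zs_le0] := Zs_inSL (t := t.+1) (ltnW (leq_trans tk kM)).
by apply: Zs_le0; apply: (subsetP (Bs_subset (t := t) (ltnW tk) kM)) uB.
Qed.

Lemma Csum_form_Ev_eq0 k u : symmetric adj -> elliptic adj e ->
  (k < M)%N -> u \in Bs k.+1 -> form (Csum Zs k) (Ev u) = 0.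
Proof.
move=> adjC [_ [_ chi_ge0]] kM; set D := ZK - Csum Zs k.
have DE : D = \sum_(k.+1 <= t < M.+1) Zs t by rewrite /D (ZK_subCsum (ltnW kM)).
have D_ge0 : leV 0 D by rewrite DE; apply: sum_Zs_ge0.
have DL : inL D.
  move=> v; rewrite DE summxE big_nat_cond; apply: rpred_sum => t /andP[/andP[kt tM] _].
  have t_range : (1 <= t <= M)%N by rewrite (leq_ltn_trans (leq0n k) kt).
  by have [_ ->] := Zs_inSL t_range.
have D_neq0 : D != 0 by have [_ _ _ HBs _] := Hseq; case: (HBs k kM).
have CD_ge0 : 0 <= form (Csum Zs k) D.
  by move: (chi_ge0 D DL D_ge0 D_neq0); rewrite chi_ZK_sub // pmulr_lge0 ?invr_gt0.
rewrite Bs_supp //; apply: form_Ev_eq0_supp => // v; rewrite -Bs_supp //.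
exact: Csum_form_Ev_le0.
Qed.

End EllipticSequence.

(* k = j + 1, M = m + 1; Bs (k+1) = B_{j+1}, Csum Zs k = C_j *)
Theorem mainTheorem9 (n : nat) (adj : rel 'I_n) (e : 'I_n -> int)
  (Htree : is_tree adj) (Hneg : neg_definite adj e) (Hell : elliptic adj e)
  (M : nat) (Bs : nat -> {set 'I_n}) (Zs : nat -> vec n)
  (Hseq : NN_elliptic_seq adj e M Bs Zs)
  (k : nat) (Hk : (k < M)%N)
  (l : vec n) (Hl : inSuppP0 adj e l)
  (Hc : assoc_cycle adj e l (Csum Zs k)) :
  forall mm : 'I_n -> nat,
    ZK adj e - EE n - l = Csum Zs k + \sum_(v | v \notin Bs k.+1) ((mm v)%:R *: Ev v) ->
    forall v, v \notin Bs k.+1 -> mm v != 0%N ->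
    forall w, w \in Bs k.+1 -> ~~ adj v w.
Proof.
move=> mm Hmm v vB mv w wB; apply/negP => vw.
have [_ adjC _ _ _] := Htree.
have [_ _ /(zcoef_neq0_form_le0 w (IM_unitmx Hneg))] := Hl.
rewrite /wP0 Hmm formDl (Csum_form_Ev_eq0 Hneg Hseq adjC Hell Hk wB) add0r leNgt.
by rewrite (form_sum_Ev_gt0 e vB wB mv vw).
Qed.
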